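(* Let $M$ be a finite abelian group of exponent greater than $2$ and let $f$ be a half-automorphism of $L_M$. Then there exist a unique $f'\in\mathrm{Aut}(K)$ and elements $x,y\in M$ with $x^2=y^2=1$ such that $f(A,1)=(f'(A),\alpha_{(x,y)}(A))$ for every $A\in K$.
   Context: Let $K=\{1,a,b,c\}$ be the Klein four-group. Set $L_M=K\times M$ with the operation $(A,x)*(B,y)=(AB,xy)$ if $B=1$, and $(A,x)*(B,y)=(AB,x^{-1}y)$ if $B\neq 1$. For $x,y\in M$ with $x^2=y^2=1$, $\alpha_{(x,y)}:K\to M$ is the map $\alpha_{(x,y)}(1)=1$, $\alpha_{(x,y)}(a)=x$, $\alpha_{(x,y)}(b)=y$, $\alpha_{(x,y)}(c)=xy$. A half-automorphism of a loop $L$ is a bijection $f:L\to L$ such that $f(XY)\in\{f(X)f(Y),f(Y)f(X)\}$ for all $X,Y\in L$. *)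

From mathcomp Require Import all_boot all_fingroup all_solvable.
Set Implicit Arguments. Unset Strict Implicit. Unset Printing Implicit Defensive.
Local Open Scope group_scope.

Inductive Klein := K1 | Ka | Kb | Kc.

Definition kmul (A B : Klein) : Klein :=
  match A, B with
  | K1, X | X, K1 => X
  | Ka, Ka | Kb, Kb | Kc, Kc => K1
  | Ka, Kb | Kb, Ka => Kc
  | Ka, Kc | Kc, Ka => Kb
  | Kb, Kc | Kc, Kb => Ka
  end.

Definition is_autK (g : Klein -> Klein) : Prop :=
  bijective g /\ forall A B, g (kmul A B) = kmul (g A) (g B).

Definition LM_mul (M : finGroupType) (X Y : Klein * M) : Klein * M :=
  match Y.1 with
  | K1 => (kmul X.1 Y.1, X.2 * Y.2)
  | _  => (kmul X.1 Y.1, (X.2)^-1 * Y.2)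
  end.

Definition half_aut (M : finGroupType) (f : Klein * M -> Klein * M) : Prop :=
  bijective f /\
  forall X Y, f (LM_mul X Y) = LM_mul (f X) (f Y) \/
              f (LM_mul X Y) = LM_mul (f Y) (f X).

Definition alpha (M : finGroupType) (x y : M) (A : Klein) : M :=
  match A with
  | K1 => 1
  | Ka => x
  | Kb => y
  | Kc => x * y
  end.

From HB Require Import structures.
From mathcomp Require Import all_boot all_fingroup all_solvable.
From Stdlib Require Import FunctionalExtensionality.
Set Implicit Arguments. Unset Strict Implicit.
Local Open Scope group_scope.

(* Choose m in M with m^-1 <> m (possible as the exponent exceeds 2).  The
   elements (A, 1) and (1, m) of L_M do not commute when A <> 1, so a
   half-automorphism cannot send (A, 1) into the abelian subgroup 1 x M: the
   induced map f' on K has trivial kernel and is an automorphism.  Moreover, a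
   half-automorphism maps the two products of a non-commuting pair X, Y onto the
   two products of f X, f Y in some order, so symmetric functions of the pair
   are preserved.  Applying this to the product of second coordinates of the
   pairs (C, 1), (1, m) and (A, m), (B, 1) with AB = C, which have the same
   products (C, m) and (C, m^-1), forces the second coordinate of f (C, 1) to
   square to 1; the value at C = c is then read off f (c, 1) = f (a, 1) f (b, 1). *)

Section HalfHomomorphism.
Variables (T : Type) (mul : T -> T -> T) (f : T -> T).
Hypothesis f_inj : injective f.
Hypothesis f_half : forall X Y,
  f (mul X Y) = mul (f X) (f Y) \/ f (mul X Y) = mul (f Y) (f X).

Lemma half_hom_sqr X : f (mul X X) = mul (f X) (f X).
Proof. by case: (f_half X X). Qed.

Lemma half_hom_comm X Y :
  mul (f X) (f Y) = mul (f Y) (f X) -> mul X Y = mul Y X.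
Proof.
move=> fXY; apply: f_inj.
by case: (f_half X Y) => ->; case: (f_half Y X) => ->.
Qed.

Lemma half_hom_sym (R : Type) (phi : T -> T -> R) X Y :
  (forall U V, phi U V = phi V U) -> mul X Y <> mul Y X ->
  phi (f (mul X Y)) (f (mul Y X)) = phi (mul (f X) (f Y)) (mul (f Y) (f X)).
Proof.
move=> phiC nXY; have fXY : f (mul X Y) <> f (mul Y X) by move/f_inj.
by case: (f_half X Y) fXY => ->; case: (f_half Y X) => -> //; rewrite phiC.
Qed.

End HalfHomomorphism.

Definition klein_code (A : Klein) : bool * bool :=
  match A with K1 => (false, false) | Ka => (true, false)
             | Kb => (false, true) | Kc => (true, true) end.

Definition klein_decode (u : bool * bool) : Klein :=
  match u with (false, false) => K1 | (true, false) => Ka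
             | (false, true) => Kb | (true, true) => Kc end.

Lemma klein_codeK : cancel klein_code klein_decode. Proof. by case. Qed.

HB.instance Definition _ := Finite.copy Klein (can_type klein_codeK).

Lemma kmulC A B : kmul A B = kmul B A. Proof. by case: A; case: B. Qed.
Lemma kmulk1 A : kmul A K1 = A. Proof. by case: A. Qed.
Lemma kmul_eq1 A B : (kmul A B == K1) = (A == B). Proof. by case: A; case: B. Qed.

Lemma autK_of_hom (g : Klein -> Klein) :
  (forall A B, g (kmul A B) = kmul (g A) (g B)) ->
  (forall A, A <> K1 -> g A <> K1) -> is_autK g.
Proof.
move=> gM gK; split=> //; apply: injF_bij => A B gAB; apply/eqP.
rewrite -kmul_eq1; apply/eqP; case: (kmul A B =P K1) => // /gK [].
by rewrite gM gAB; apply/eqP; rewrite kmul_eq1.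
Qed.

Section LoopLM.
Variable M : finGroupType.
Implicit Types (A B : Klein) (x y : M) (X Y : Klein * M).

Lemma LM_mul_fst X Y : (LM_mul X Y).1 = kmul X.1 Y.1.
Proof. by rewrite /LM_mul; case: Y.1. Qed.

Lemma LM_mul_snd1 X Y : Y.1 = K1 -> (LM_mul X Y).2 = X.2 * Y.2.
Proof. by rewrite /LM_mul => ->. Qed.

Lemma LM_mul_sndN X Y : Y.1 <> K1 -> (LM_mul X Y).2 = X.2^-1 * Y.2.
Proof. by rewrite /LM_mul; case: Y.1. Qed.

Lemma LM_mul1 A x y : LM_mul (A, x) (K1, y) = (A, x * y).
Proof. by rewrite /LM_mul /= kmulk1. Qed.

Lemma LM_mulN A B x y :
  B <> K1 -> LM_mul (A, x) (B, y) = (kmul A B, x^-1 * y).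
Proof. by rewrite /LM_mul /=; case: B. Qed.

Lemma LM_mul_idem X : LM_mul X X = X -> X = (K1, 1).
Proof.
case: X => [[] x] //; rewrite LM_mul1 => -[xx].
by congr (_, _); apply: (mulIg x); rewrite mul1g.
Qed.

Lemma LM_sqr_fstN X : X.1 <> K1 -> LM_mul X X = (K1, 1).
Proof. by case: X => [A x] /= nA; rewrite LM_mulN // mulVg; case: A nA. Qed.

Hypothesis M_comm : forall x y : M, commute x y.

Lemma LM_mul_fst1C X Y : X.1 = K1 -> Y.1 = K1 -> LM_mul X Y = LM_mul Y X.
Proof. by case: X Y => [A x] [B y] /= -> ->; rewrite !LM_mul1 M_comm. Qed.

Variable f : Klein * M -> Klein * M.
Hypothesis f_inj : injective f.
Hypothesis f_half : forall X Y,
  f (LM_mul X Y) = LM_mul (f X) (f Y) \/ f (LM_mul X Y) = LM_mul (f Y) (f X).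
Variable m : M.
Hypothesis m_neq_inv : m^-1 <> m.

Lemma f_unit : f (K1, 1) = (K1, 1).
Proof.
by apply: LM_mul_idem; rewrite -(half_hom_sqr f_half) LM_mul1 mulg1.
Qed.

Lemma f_fst_m : (f (K1, m)).1 = K1.
Proof.
case: ((f (K1, m)).1 =P K1) => // /LM_sqr_fstN.
rewrite -(half_hom_sqr f_half) LM_mul1 -f_unit => /f_inj [mm].
by case: m_neq_inv; apply/eqP; rewrite eq_invg_mul mm.
Qed.

Lemma f_fst_neq1 A x : A <> K1 -> (f (A, x)).1 <> K1.
Proof.
move=> nA fA; have /(half_hom_comm f_inj f_half) :
    LM_mul (f (A, x)) (f (K1, m)) = LM_mul (f (K1, m)) (f (A, x)).
  by apply: LM_mul_fst1C; rewrite ?f_fst_m.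
rewrite LM_mul1 LM_mulN // => -[xm]; apply: m_neq_inv.
by apply: (mulIg x); rewrite -xm M_comm.
Qed.

Let snd_prodC (U V : Klein * M) : U.2 * V.2 = V.2 * U.2.
Proof. exact: M_comm. Qed.

Let m_neq_mV A : (A, m) <> (A, m^-1). Proof. by case=> /esym. Qed.

Lemma f_snd_mmV_sqr C :
  C <> K1 -> (f (C, m)).2 * (f (C, m^-1)).2 = (f (C, 1)).2 ^+ 2.
Proof.
move=> nC; have nfC := f_fst_neq1 (x := 1) nC.
have := half_hom_sym f_inj f_half (X := (C, 1)) (Y := (K1, m)) snd_prodC.
rewrite LM_mul1 LM_mulN // mul1g mulg1 => ->; last exact: m_neq_mV.
rewrite LM_mul_snd1 ?f_fst_m // LM_mul_sndN //.
by rewrite mulgA mulgK expgS expg1.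
Qed.

Lemma f_snd_mmV_kmul A B : A <> K1 -> B <> K1 ->
  (f (kmul A B, m)).2 * (f (kmul A B, m^-1)).2 = 1.
Proof.
move=> nA nB; have nfA := f_fst_neq1 (x := m) nA; have nfB := f_fst_neq1 (x := 1) nB.
have := half_hom_sym f_inj f_half (X := (A, m)) (Y := (B, 1)) snd_prodC.
rewrite !LM_mulN // invg1 mul1g mulg1 (kmulC B) snd_prodC => -> /=.
  by rewrite !LM_mul_sndN // mulgA mulgK mulVg.
by move=> /esym /m_neq_mV.
Qed.

Lemma f_snd_sqr C : C <> K1 -> (f (C, 1)).2 ^+ 2 = 1.
Proof.
move=> nC; rewrite -f_snd_mmV_sqr //.
have [A [B [nA nB <-]]] : exists A B, [/\ A <> K1, B <> K1 & kmul A B = C].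
  by case: C nC => // _; [exists Kb, Kc | exists Ka, Kc | exists Ka, Kb].
exact: f_snd_mmV_kmul.
Qed.

Lemma f_fst_kmul A B : (f (kmul A B, 1)).1 = kmul (f (A, 1)).1 (f (B, 1)).1.
Proof.
have -> : (kmul A B, 1 : M) = LM_mul (A, 1) (B, 1).
  by case: B; rewrite /LM_mul /= ?invg1 ?mulg1.
by case: (f_half (A, 1) (B, 1)) => ->; rewrite LM_mul_fst // kmulC.
Qed.

Lemma f_snd_kmul A B : A <> K1 -> B <> K1 ->
  (f (kmul A B, 1)).2 = (f (A, 1)).2 * (f (B, 1)).2.
Proof.
move=> nA nB; have nfA := f_fst_neq1 (x := 1) nA; have nfB := f_fst_neq1 (x := 1) nB.
have invA : (f (A, 1)).2^-1 = (f (A, 1)).2.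
  by apply/eqP; rewrite eq_invg_mul -expg2 f_snd_sqr.
have invB : (f (B, 1)).2^-1 = (f (B, 1)).2.
  by apply/eqP; rewrite eq_invg_mul -expg2 f_snd_sqr.
have -> : (kmul A B, 1 : M) = LM_mul (A, 1) (B, 1) by rewrite LM_mulN // mulg1 invg1.
case: (f_half (A, 1) (B, 1)) => ->; rewrite LM_mul_sndN //.
  by rewrite invA.
by rewrite invB M_comm.
Qed.

Lemma f_fst_autK : is_autK (fun A => (f (A, 1)).1).
Proof. exact: autK_of_hom f_fst_kmul (fun A => f_fst_neq1 (x := 1)). Qed.

Lemma f_K_alpha : exists x y : M, [/\ x ^+ 2 = 1, y ^+ 2 = 1 &
  forall A, f (A, 1) = ((f (A, 1)).1, alpha x y A)].
Proof.
exists (f (Ka, 1)).2, (f (Kb, 1)).2; split; try exact: f_snd_sqr.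
case; rewrite /= -?surjective_pairing //; first by rewrite f_unit.
by rewrite -(f_snd_kmul (A := Ka) (B := Kb)) //= -surjective_pairing.
Qed.

End LoopLM.

Lemma exists_inv_neq (M : finGroupType) :
  2 < exponent [set: M] -> exists m : M, m^-1 <> m.
Proof.
move=> expM; have [m /eqP | allI] := pickP (fun m : M => m^-1 != m).
  by exists m.
suff /(dvdn_leq (isT : 0 < 2)) : exponent [set: M] %| 2 by rewrite leqNgt expM.
apply/exponentP => x _; apply/eqP.
by rewrite expg2 -eq_invg_mul; apply/negbFE/allI.
Qed.

Theorem corollary4p7 (M : finGroupType)
  (Mab : abelian [set: M]) (Mexp : 2 < exponent [set: M])
  (f : Klein * M -> Klein * M) (hf : half_aut f) :
  exists f' : Klein -> Klein,
    [/\ is_autK f',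
        (exists x y : M, [/\ x ^+ 2 = 1, y ^+ 2 = 1 &
           forall A : Klein, f (A, 1) = (f' A, alpha x y A)]) &
        (forall g : Klein -> Klein, is_autK g ->
           (exists x y : M, [/\ x ^+ 2 = 1, y ^+ 2 = 1 &
              forall A : Klein, f (A, 1) = (g A, alpha x y A)]) ->
           g = f')].
Proof.
have M_comm (x y : M) : commute x y by apply: (centsP Mab); rewrite inE.
have [m m_neq_inv] := exists_inv_neq Mexp.
case: hf => /bij_inj f_inj f_half.
exists (fun A => (f (A, 1)).1); split.
- exact (f_fst_autK M_comm f_inj f_half m_neq_inv).
- exact (f_K_alpha M_comm f_inj f_half m_neq_inv).
- move=> g _ [x [y [_ _ fg]]]; apply: functional_extensionality => A.
  by rewrite fg.
Qed.
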